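(* With the notation of the context, the conditional probability density of $u_T[\theta]$ given the $n-1$ previous values is $$p_u\big(u_T[\theta]\,\big|\,\{u_T[\theta-i]\}_{i=1}^{n-1}\big)=\frac{\mathcal F^{-1}_{\{\omega_i\}}\big\{e^{I_{w,\beta_{\mathrm L,T}}(\omega_0,\omega_1,\dots,\omega_{n-1})}\big\}\big(\{u_T[\theta-i]\}_{i=0}^{n-1}\big)}{\mathcal F^{-1}_{\{\omega_i\}}\big\{e^{I_{w,\beta_{\mathrm L,T}}(0,\omega_1,\dots,\omega_{n-1})}\big\}\big(\{u_T[\theta-i]\}_{i=1}^{n-1}\big)},$$ where $$I_{w,\beta_{\mathrm L,T}}(\omega_0,\dots,\omega_{n-1})=\int_{\mathbb R}f\Big(\sum_{i=0}^{n-1}\omega_i\,\beta_{\mathrm L,T}(x-iT)\Big)dx,$$ the inverse Fourier transform in the numerator is $n$-dimensional in $(\omega_0,\dots,\omega_{n-1})$ and in the denominator $(n-1)$-dimensional in $(\omega_1,\dots,\omega_{n-1})$.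
   Context: Innovation process: $w$ is a generalized random process on $\mathcal S(\mathbb R)$ with characteristic form $\mathbb E\{e^{-j\langle w,\varphi\rangle}\}=\exp\big(\int_{\mathbb R}f(\varphi(x))dx\big)$, where $f(\omega)=-\frac{\sigma^2}{2}\omega^2+\int_{\mathbb R\setminus\{0\}}(\cos(a\omega)-1)v(a)\,da$ ($\sigma\ge0$, $v$ symmetric nonnegative with $\int\min(1,a^2)v(a)da<\infty$). Joint densities of pairings are obtained by inverse Fourier transform of the characteristic form: the joint density of $(\langle w,\varphi_1\rangle,\dots,\langle w,\varphi_k\rangle)$ has Fourier transform (with kernel $e^{-j\sum\omega_ix_i}$) equal to $\mathbb E\{e^{-j\langle w,\sum_i\omega_i\varphi_i\rangle}\}$. $\mathrm L=\lambda_n\prod_{i=1}^n(\mathrm D-r_i\mathrm I)$ with $\Re r_i\le0$; $d_T[0..n]$ are the coefficients of $\lambda_n\prod_{i=1}^n(1-e^{r_iT}z^{-1})$; $\beta_{\mathrm L,T}$ is the impulse response of $\mathrm L_{d,T}\mathrm L^{-1}$ (the L-spline, supported in $[0,nT)$), where $\mathrm L^{-1}$ is a right inverse of $\mathrm L$ given by a kernel as usual and $\mathrm L_{d,T}$ has impulse response $\sum_kd_T[k]\delta(\cdot-kT)$. For $s=\mathrm L^{-1}w$, $u_T[i]=\sum_kd_T[k]s((i-k)T)=\langle w,\beta_{\mathrm L,T}(iT-\cdot)\rangle$. The relevant densities are assumed to exist. *)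

From HB Require Import structures.
From mathcomp Require Import all_boot all_order all_algebra.
From mathcomp Require Import all_classical all_reals all_analysis.
From mathcomp Require Import complex.

Set Implicit Arguments.
Unset Strict Implicit.
Unset Printing Implicit Defensive.

Import Order.TTheory GRing.Theory Num.Theory.
Local Open Scope ring_scope.
Local Open Scope classical_set_scope.

Section Defs.
Variable R : realType.

Local Notation leb := (@lebesgue_measure R).

Definition levy_exponent (sigma : R) (v : R -> R) (w : R) : R :=
  - (sigma ^+ 2 / 2) * w ^+ 2
  + Rintegral leb [set~ 0] (fun a => (cos (a * w) - 1) * v a).

(* Class of test functions on which the pairing <w, phi> is used:
   measurable, bounded, compactly supported (contains the L-spline and
   all finite linear combinations of its shifts / reflections). *)
Definition test_fun (phi : R -> R) : Prop :=
  [/\ measurable_fun setT phi,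
      exists M : R, forall x, `|phi x| <= M
    & exists K : R, forall x, K < `|x| -> phi x = 0].

(* E{ e^{-j X} } for a real random variable X, as a complex number *)
Definition cexp_mj d (Omega : measurableType d) (P : probability Omega R)
  (X : Omega -> R) : R[i] :=
  Complex (Rintegral P setT (fun o => cos (X o)))
          (- Rintegral P setT (fun o => sin (X o))).

(* Iterated Lebesgue integral over the first k coordinates
   (omega_0, ..., omega_{k-1}) of a function of a nat-indexed vector;
   d omega_0 is the outermost integral. *)
Fixpoint iter_int (k : nat) (F : (nat -> R) -> R) : R :=
  match k with
  | 0 => F (fun _ => 0)
  | k'.+1 => Rintegral leb setT
       (fun t => iter_int k' (fun y => F (fun i => if i is j.+1 then y j else t)))
  end.

(* k-dimensional inverse Fourier transform (kernel e^{+j sum_i w_i x_i}):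
   F^{-1}{g}(x) = (2 pi)^{-k} int_{R^k} g(w) e^{j sum_{i<k} w_i x_i} dw,
   written out in real and imaginary parts. *)
Definition invFT (k : nat) (g : (nat -> R) -> R[i]) (x : nat -> R) : R[i] :=
  let s w := \sum_(i < k) w i * x i in
  ((2 * pi) ^- k)%:C%C *
  Complex
    (iter_int k (fun w => complex.Re (g w) * cos (s w) - complex.Im (g w) * sin (s w)))
    (iter_int k (fun w => complex.Re (g w) * sin (s w) + complex.Im (g w) * cos (s w))).

(* Joint characteristic function of the pairings
   (<w,phi_0>, ..., <w,phi_{k-1}>):  w |-> E{ e^{-j <w, sum_i w_i phi_i>} } *)
Definition pairing_cf d (Omega : measurableType d) (P : probability Omega R)
  (W : (R -> R) -> Omega -> R) (k : nat) (phis : nat -> R -> R)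
  (w : nat -> R) : R[i] :=
  cexp_mj P (W (fun y => \sum_(i < k) w i * phis i y)).

Definition pairing_density d (Omega : measurableType d)
  (P : probability Omega R) (W : (R -> R) -> Omega -> R) (k : nat)
  (phis : nat -> R -> R) (x : nat -> R) : R[i] :=
  invFT k (pairing_cf P W k phis) x.

Definition cond_density d (Omega : measurableType d)
  (P : probability Omega R) (W : (R -> R) -> Omega -> R) (n : nat)
  (phis : nat -> R -> R) (x : nat -> R) : R[i] :=
  pairing_density P W n phis x /
  pairing_density P W n.-1 (fun j => phis j.+1) (fun j => x j.+1).

(* u_T[i] = < w, beta(iT - .) > : the test function beta(iT - .) *)
Definition uT_test (beta : R -> R) (T : R) (i : int) : R -> R :=
  fun y => beta (i%:~R * T - y).

Definition I_wbeta (f : R -> R) (beta : R -> R) (T : R) (n : nat)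
  (w : nat -> R) : R :=
  Rintegral leb setT (fun x => f (\sum_(i < n) w i * beta (x - i%:R * T))).

End Defs.

From HB Require Import structures.
From mathcomp Require Import all_boot all_order all_algebra.
From mathcomp Require Import all_classical all_reals all_analysis.
From mathcomp Require Import complex lra.
Import Order.TTheory GRing.Theory Num.Theory.
Local Open Scope ring_scope.
Local Open Scope classical_set_scope.

(** The pairings u_T[theta - i] = <w, beta((theta - i)T - .)> are pairings of
    w with reflected shifts of the L-spline, so their joint characteristic
    function is the characteristic form evaluated at
    sum_i omega_i beta(theta T - iT - .). The reflection x |-> theta T - x
    preserves Lebesgue measure and turns the exponent into
    I(omega_0, ..., omega_{n-1}); the conditioning values u_T[theta - i],
    i >= 1, correspond to omega_0 = 0. Both densities in the quotient are
    then the inverse Fourier transforms of these characteristic functions. *)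

(** No measurability of the integrand is assumed: the proof works
    directly with the supremum over simple functions defining the integral. *)
Section measure_preserving_involution.
Context {d} {T : measurableType d} {R : realType}.
Context {mu : {measure set T -> \bar R}} {phi : T -> T}.
Hypothesis mphi : measurable_fun setT phi.
Hypothesis phiK : involutive phi.
Hypothesis mu_preimage : forall A, measurable A -> mu (phi @^-1` A) = mu A.

Import HBNNSimple.

Section simple_function.
Variable h : {nnsfun T >-> R}.

Definition precomp : T -> R := fun x => h (phi x).

Let precomp_measurable : measurable_fun setT precomp.
Proof. exact: measurableT_comp. Qed.
HB.instance Definition _ := isMeasurableFun.Build _ _ _ _ precomp precomp_measurable.

Let precomp_finite_image : finite_set (range precomp).
Proof. by apply: sub_finite_set (fimfunP h) => _ [x _ <-]; exists (phi x). Qed.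
HB.instance Definition _ := FiniteImage.Build _ _ precomp precomp_finite_image.

Let precomp_ge0 x : 0 <= precomp x.
Proof. by []. Qed.
HB.instance Definition _ := isNonNegFun.Build _ _ precomp precomp_ge0.

Lemma sintegral_precomp : sintegral mu precomp = sintegral mu h.
Proof.
apply: eq_fsbigr => y _.
by rewrite -[precomp @^-1` _]/(phi @^-1` (h @^-1` _)) mu_preimage.
Qed.

End simple_function.

Local Open Scope ereal_scope.

Let ge0_integral_comp_le (g : T -> \bar R) : (forall x, 0 <= g x) ->
  \int[mu]_x g (phi x) <= \int[mu]_x g x.
Proof.
move=> g0; rewrite !ge0_integralTE//.
apply: ge_ereal_sup => _ [h hg <-]; apply: ereal_sup_ubound.
exists [the {nnsfun T >-> R} of precomp h]; last exact: sintegral_precomp.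
by move=> x /=; have := hg (phi x); rewrite phiK.
Qed.

Lemma ge0_integral_comp_involution (g : T -> \bar R) : (forall x, 0 <= g x) ->
  \int[mu]_x g (phi x) = \int[mu]_x g x.
Proof.
move=> g0; apply/eqP; rewrite eq_le ge0_integral_comp_le//=.
under [X in X <= _]eq_integral do rewrite -[x in g x]phiK.
exact: ge0_integral_comp_le.
Qed.

Lemma integral_comp_involution (g : T -> \bar R) :
  \int[mu]_x g (phi x) = \int[mu]_x g x.
Proof.
rewrite integralE [RHS]integralE.
rewrite -(ge0_integral_comp_involution _ (funepos_ge0 g)).
rewrite -(ge0_integral_comp_involution _ (funeneg_ge0 g)).
by congr (_ - _); apply: eq_integral => x _; rewrite !(funeposE, funenegE).
Qed.

End measure_preserving_involution.

Section reflection.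
Context {R : realType}.
Variable c : R.

Let reflect : measurableTypeR R -> measurableTypeR R := fun x : R => c - x.

Let reflect_measurable : measurable_fun setT reflect.
Proof. exact: measurable_realfun.measurable_funB. Qed.

Lemma lebesgue_measure_reflect (A : set R) : measurable A ->
  lebesgue_measure (reflect @^-1` A) = lebesgue_measure A.
Proof.
(* The measure structure of a pushforward is parameterised by the
   measurability of the map, hence the explicit application below. *)
pose image_measure := (pushforward lebesgue_measure reflect : {measure set _ -> \bar R}).
pose mu := image_measure reflect_measurable.
have itv_reflect X : ocitv X -> lebesgue_measure X = mu X.
  move=> [[a b] _ <-]; rewrite /mu /image_measure /= /pushforward.
  have -> : reflect @^-1` `]a, b] = `[c - b, c - a[.
    by apply/seteqP; split => x /=; rewrite /reflect !in_itv/= => /andP[? ?];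
      apply/andP; split; lra.
  rewrite !lebesgue_measure_itv/= !lte_fin ltrD2l ltrN2; case: ifP => // _.
  by congr (_%:E); lra.
move=> mA; rewrite (lebesgue_measure_unique itv_reflect mA).
by rewrite /mu /image_measure /= /pushforward.
Qed.

Lemma Rintegral_reflect (F : R -> R) :
  Rintegral lebesgue_measure setT (fun x => F (c - x)) =
  Rintegral lebesgue_measure setT F.
Proof.
have reflectK : involutive reflect by move=> x; rewrite /reflect subKr.
by rewrite /Rintegral -(integral_comp_involution reflect_measurable reflectK
  lebesgue_measure_reflect (fun x => (F x)%:E)).
Qed.

End reflection.

Section test_functions.
Context {R : realType}.
Implicit Types (phi psi : R -> R).

Lemma test_fun0 : test_fun (fun _ : R => 0).
Proof. by split; [exact: measurable_cst | exists 0 => x; rewrite normr0 | exists 0]. Qed.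

Lemma test_funD phi psi : test_fun phi -> test_fun psi ->
  test_fun (fun y => phi y + psi y).
Proof.
move=> [mphi [M phiM] [K phiK]] [mpsi [N psiN] [L psiL]]; split.
- exact: measurable_realfun.measurable_funD.
- by exists (M + N) => x; rewrite (le_trans (ler_normD _ _))// lerD.
- exists (Num.max K L) => x; rewrite gt_max => /andP[xK xL].
  by rewrite phiK// psiL// addr0.
Qed.

Lemma test_funZ a phi : test_fun phi -> test_fun (fun y => a * phi y).
Proof.
move=> [mphi [M phiM] [K phiK]]; split.
- exact: measurable_realfun.measurable_funM.
- by exists (`|a| * M) => x; rewrite normrM ler_wpM2l.
- by exists K => x xK; rewrite phiK// mulr0.
Qed.

Lemma test_fun_reflect c phi : test_fun phi -> test_fun (fun y => phi (c - y)).
Proof.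
move=> [mphi [M phiM] [K phiK]]; split.
- exact: measurableT_comp mphi (measurable_realfun.measurable_funB _ _).
- by exists M.
- exists (K + `|c|) => y yK; apply: phiK.
  have := ler_normD (y - c) c; rewrite subrK distrC; lra.
Qed.

Lemma test_fun_lincomb k (w : nat -> R) (phi : nat -> R -> R) :
  (forall i, test_fun (phi i)) ->
  test_fun (fun y => \sum_(i < k) w i * phi i y).
Proof.
move=> phi_test; elim: k => [|k IHk].
  by under eq_fun do rewrite big_ord0; exact: test_fun0.
have -> : (fun y => \sum_(i < k.+1) w i * phi i y) =
          (fun y => \sum_(i < k) w i * phi i y + w k * phi k y).
  by apply/funext => y; rewrite big_ord_recr.
by apply: test_funD => //; apply: test_funZ.
Qed.

End test_functions.

Section pairing_characteristic_function.
Context {R : realType} {d : measure_display} {Omega : measurableType d}.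
Context {P : probability Omega R} {W : (R -> R) -> Omega -> R} {f : R -> R}.
Hypothesis characteristic_form : forall phi, test_fun phi ->
  cexp_mj P (W phi) =
  (expR (Rintegral lebesgue_measure setT (fun x => f (phi x))))%:C%C.

Lemma pairing_cf_reflected_shifts (beta : R -> R) (c : R) (b : nat -> R)
    (k : nat) (w : nat -> R) :
  test_fun beta ->
  pairing_cf P W k (fun i y => beta (c - b i - y)) w =
  (expR (Rintegral lebesgue_measure setT
           (fun x => f (\sum_(i < k) w i * beta (x - b i)))))%:C%C.
Proof.
move=> beta_test; rewrite /pairing_cf characteristic_form; last first.
  by apply: (test_fun_lincomb k w (fun i y => beta (c - b i - y))) => i;
    exact: test_fun_reflect.
rewrite -(Rintegral_reflect c); congr ((expR (Rintegral _ _ _))%:C%C).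
apply/funext => x; congr f; apply: eq_bigr => i _.
by congr (_ * beta _); lra.
Qed.

End pairing_characteristic_function.

Theorem theorem2 (R : realType) (d : measure_display) (Omega : measurableType d)
  (P : probability Omega R) (W : (R -> R) -> Omega -> R)
  (sigma : R) (v : R -> R) (beta : R -> R) (T : R) (n : nat) (theta : int) :
  0 <= sigma ->
  (forall a, 0 <= v a) ->
  (forall a, v (- a) = v a) ->
  measurable_fun setT v ->
  (\int[@lebesgue_measure R]_(a in [set~ 0%R]) ((Num.min 1 (a ^+ 2) * v a)%R)%:E < +oo)%E ->
  (forall phi, test_fun phi -> measurable_fun setT (W phi)) ->
  (forall phi, test_fun phi ->
     cexp_mj P (W phi) =
     (expR (Rintegral (@lebesgue_measure R) setT
              (fun x => levy_exponent sigma v (phi x))))%:C%C) ->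
  0 < T -> (0 < n)%N -> test_fun beta ->
  forall x : nat -> R,
    cond_density P W n (fun i : nat => uT_test beta T (theta - i%:Z)) x =
    invFT n (fun w => (expR (I_wbeta (levy_exponent sigma v) beta T n w))%:C%C) x /
    invFT n.-1
      (fun w => (expR (I_wbeta (levy_exponent sigma v) beta T n
                         (fun i => if i is j.+1 then w j else 0)))%:C%C)
      (fun j => x j.+1).
Proof.
move=> _ _ _ _ _ _ characteristic_form _ n_gt0 beta_test x.
case: n n_gt0 x => // n _ x.
set f := levy_exponent sigma v.
have uT_shift (s : nat) :
    uT_test beta T (theta - s%:Z) = fun y => beta (theta%:~R * T - s%:R * T - y).
  by rewrite /uT_test rmorphB /= mulrBl.
have joint_cf : pairing_cf P W n.+1 (fun i => uT_test beta T (theta - i%:Z)) =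
    (fun w => (expR (I_wbeta f beta T n.+1 w))%:C%C).
  apply/funext => w; under eq_fun do rewrite uT_shift.
  exact: (pairing_cf_reflected_shifts characteristic_form).
have marginal_cf :
    pairing_cf P W n (fun j => uT_test beta T (theta - j.+1%:Z)) =
    (fun w => (expR (I_wbeta f beta T n.+1
                       (fun i => if i is j.+1 then w j else 0)))%:C%C).
  apply/funext => w; under eq_fun do rewrite uT_shift.
  rewrite (pairing_cf_reflected_shifts characteristic_form beta
    (theta%:~R * T) (fun j => j.+1%:R * T) n w beta_test).
  congr ((expR (Rintegral _ _ _))%:C%C); apply/funext => y.
  by rewrite big_ord_recl /= mul0r add0r.
by rewrite /cond_density /pairing_density joint_cf marginal_cf.
Qed.
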